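(* For every $n\ge1$ and every boolean function $f:\{-1,1\}^n\to\{-1,1\}$, $$\mathrm{Ent}(f)\le \frac{1}{\ln 2}\Big(3I(f)+\sum_{k=1}^n I_k(f)\ln\frac{4}{I_k(f)}\Big),$$ with the convention $I_k(f)\ln\frac{4}{I_k(f)}=0$ when $I_k(f)=0$.
   Context: Let $x$ be uniformly distributed on $\{-1,1\}^n$. For $k\in[n]$, $\mu_k$ flips the $k$-th coordinate. $I_k(f)=\mathbb{P}_x[f(x)\neq f(\mu_k(x))]$, $I(f)=\sum_k I_k(f)$. For $S\subseteq[n]$, $\hat f(S)=\mathbb{E}_x[f(x)\prod_{k\in S}x_k]$, and $\mathrm{Ent}(f)=\sum_{S\subseteq[n]}\hat f(S)^2\log_2\frac{1}{\hat f(S)^2}$ (terms with $\hat f(S)=0$ are $0$). $\ln$ is the natural logarithm. *)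

From HB Require Import structures.
From mathcomp Require Import all_boot all_order all_algebra.
From mathcomp Require Import all_classical all_reals.
From mathcomp Require Import exp.
Set Implicit Arguments. Unset Strict Implicit. Unset Printing Implicit Defensive.
Import Order.TTheory GRing.Theory Num.Theory.
Local Open Scope ring_scope.

(* Points of {-1,1}^n are encoded as finite functions 'I_n -> bool,
   with true <-> 1 and false <-> -1. *)
Definition cube (n : nat) := {ffun 'I_n -> bool}.

Definition sgnR (R : realType) (b : bool) : R := if b then 1 else -1.

Definition flip n (k : 'I_n) (x : cube n) : cube n :=
  [ffun i => if i == k then ~~ x i else x i].

Definition infl (R : realType) n (f : cube n -> bool) (k : 'I_n) : R :=
  #|[set x : cube n | f x != f (flip k x)]|%:R / (2 ^+ n).

Definition total_infl (R : realType) n (f : cube n -> bool) : R :=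
  \sum_(k < n) infl R f k.

Definition fourier (R : realType) n (f : cube n -> bool) (S : {set 'I_n}) : R :=
  (\sum_(x : cube n) sgnR R (f x) * \prod_(k in S) sgnR R (x k)) / (2 ^+ n).

Definition log2 (R : realType) (y : R) : R := ln y / ln 2.

Definition Ent (R : realType) n (f : cube n -> bool) : R :=
  \sum_(S : {set 'I_n})
     (if fourier R f S == 0 then 0
      else fourier R f S ^+ 2 * log2 (1 / fourier R f S ^+ 2)).

From HB Require Import structures.
From mathcomp Require Import all_boot all_order all_algebra.
From mathcomp Require Import all_classical all_reals.
From mathcomp Require Import sequences exp.
From mathcomp Require Import ring lra.
Set Implicit Arguments. Unset Strict Implicit. Unset Printing Implicit Defensive.
Import Order.TTheory GRing.Theory Num.Theory.
Local Open Scope ring_scope.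

(* The squares p_S = f^(S)^2 form a probability distribution on subsets of
   [n] (Parseval), and the influence I_k = sum_{S ∋ k} p_S is its k-th
   marginal, since the discrete derivative of f in direction k has Fourier
   coefficients f^(S) [k ∈ S].  Gibbs' inequality against the product weights
   r_S = prod_{k ∈ S} I_k, whose total mass prod_k (1 + I_k) is at most e^I,
   bounds the natural entropy of p by I + sum_k I_k ln (1/I_k); this is
   stronger than the claimed bound. *)

Definition walsh (R : realType) n (S : {set 'I_n}) (x : cube n) : R :=
  \prod_(k in S) sgnR R (x k).

(* [fourier R f] is [fcoef (sgnR R \o f)] up to conversion. *)
Definition fcoef (R : realType) n (g : cube n -> R) (S : {set 'I_n}) : R :=
  (\sum_(x : cube n) g x * walsh R S x) / 2 ^+ n.

(* Takes values in {0, 1, -1} and is nonzero exactly where f is pivotal in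
   direction k, so its squared norm is I_k(f). *)
Definition discrete_deriv (R : realType) n (f : cube n -> bool) (k : 'I_n)
    (x : cube n) : R :=
  (sgnR R (f x) - sgnR R (f (flip k x))) / 2.

Lemma flipK n (k : 'I_n) : involutive (flip k).
Proof.
by move=> x; apply/ffunP => i; rewrite !ffunE; case: eqP; rewrite ?negbK.
Qed.

Section Fourier.
Variables (R : realType) (n : nat).

Lemma sgnR_negb b : sgnR R (~~ b) = - sgnR R b.
Proof. by case: b; rewrite /sgnR ?opprK. Qed.

Lemma sgnR_mulD1 a b : sgnR R a * sgnR R b + 1 = if a == b then 2 else 0.
Proof. by case: a; case: b; rewrite /sgnR /=; lra. Qed.

Lemma sum_walsh_mul (x y : cube n) :
  \sum_(S : {set 'I_n}) walsh R S x * walsh R S y =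
  if x == y then 2 ^+ n else 0.
Proof.
transitivity (\prod_(k < n) (sgnR R (x k) * sgnR R (y k) + 1)).
  rewrite bigA_distr; apply: eq_bigr => S _.
  rewrite /walsh -big_split big_mkcond.
  by apply: eq_bigr => k _; case: (k \in S).
have [<-|x_neq_y] := eqVneq x y.
  rewrite (eq_bigr (fun=> 2)) ?prodr_const ?card_ord // => k _.
  by rewrite sgnR_mulD1 eqxx.
have [k xk_neq_yk] : exists k, x k != y k.
  apply/existsP; apply: contraNT x_neq_y => /existsPn eq_xy.
  by apply/eqP/ffunP => k; apply/eqP/negPn.
by rewrite (bigD1 k) //= sgnR_mulD1 (negbTE xk_neq_yk) mul0r.
Qed.

Lemma parseval (g : cube n -> R) :
  \sum_(S : {set 'I_n}) fcoef g S ^+ 2 = (\sum_x g x ^+ 2) / 2 ^+ n.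
Proof.
have two_n_neq0 : (2 ^+ n : R) != 0 by rewrite expf_neq0 // pnatr_eq0.
transitivity (\sum_(S : {set 'I_n}) \sum_(x : cube n) \sum_(y : cube n)
    g x * g y * (walsh R S x * walsh R S y) / (2 ^+ n * 2 ^+ n)).
  apply: eq_bigr => S _; rewrite /fcoef expr2 mulf_div big_distrlr mulr_suml.
  by apply: eq_bigr => x _; rewrite mulr_suml; apply: eq_bigr => y _ /=; ring.
rewrite exchange_big; under eq_bigr do rewrite exchange_big.
transitivity (\sum_(x : cube n) \sum_(y : cube n)
    g x * g y * (if x == y then 2 ^+ n else 0) / (2 ^+ n * 2 ^+ n)).
  apply: eq_bigr => x _; apply: eq_bigr => y _.
  by rewrite -sum_walsh_mul -mulr_suml -mulr_sumr.
rewrite mulr_suml; apply: eq_bigr => x _.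
rewrite (bigD1 x) //= big1 ?addr0 => [|y /negbTE]; first by rewrite eqxx; field.
by rewrite eq_sym => ->; rewrite mulr0 mul0r.
Qed.

Lemma walsh_flip k S (x : cube n) :
  walsh R S (flip k x) = if k \in S then - walsh R S x else walsh R S x.
Proof.
rewrite /walsh; case: ifP => kS.
  rewrite (bigD1 k) //= [in RHS](bigD1 k) //= ffunE eqxx sgnR_negb mulNr.
  congr (- (_ * _)); apply: eq_bigr => i /andP[_ /negbTE ik].
  by rewrite ffunE ik.
apply: eq_bigr => i iS; rewrite ffunE; case: eqP => // ik.
by rewrite ik kS in iS.
Qed.

Variable f : cube n -> bool.

Lemma fcoef_discrete_deriv k S :
  fcoef (discrete_deriv R f k) S = if k \in S then fourier R f S else 0.
Proof.
rewrite /fcoef /fourier.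
have -> : \sum_x discrete_deriv R f k x * walsh R S x =
   (\sum_x sgnR R (f x) * walsh R S x -
    \sum_x sgnR R (f (flip k x)) * walsh R S x) / 2.
  rewrite -sumrB mulr_suml.
  by apply: eq_bigr => x _; rewrite /discrete_deriv; ring.
rewrite [X in _ - X](reindex_inj (inv_inj (@flipK n k))) /=.
under [X in _ - X]eq_bigr do rewrite flipK walsh_flip.
case: ifP => kS.
  under [X in _ - X]eq_bigr do rewrite mulrN.
  by rewrite sumrN opprK; congr (_ / _); field.
by rewrite subrr mul0r mul0r.
Qed.

Lemma infl_fourier k :
  infl R f k =
  \sum_(S : {set 'I_n}) (if k \in S then fourier R f S ^+ 2 else 0).
Proof.
transitivity (\sum_(S : {set 'I_n}) fcoef (discrete_deriv R f k) S ^+ 2).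
  rewrite parseval /infl; congr (_ / _).
  rewrite -sumr_const big_mkcond /=.
  apply: eq_bigr => x _; rewrite inE /discrete_deriv.
  by case: (f x); case: (f (flip k x)); rewrite /sgnR /=; field.
apply: eq_bigr => S _.
by rewrite fcoef_discrete_deriv; case: ifP; rewrite ?expr0n.
Qed.

Lemma sum_fourier_sqr : \sum_(S : {set 'I_n}) fourier R f S ^+ 2 = 1.
Proof.
have two_n_neq0 : (2 ^+ n : R) != 0 by rewrite expf_neq0 // pnatr_eq0.
rewrite (parseval (fun x => sgnR R (f x))).
rewrite (eq_bigr (fun=> 1)) => [|x _]; last by case: (f x); rewrite /sgnR; lra.
by rewrite sumr_const card_ffun card_bool card_ord natrX divff.
Qed.

End Fourier.

Section Entropy.
Variable R : realType.

Lemma ln_prod (I : finType) (P : pred I) (a : I -> R) :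
  (forall i, P i -> 0 < a i) ->
  ln (\prod_(i | P i) a i) = \sum_(i | P i) ln (a i).
Proof.
move=> a_gt0; rewrite (eq_bigr (fun i => expR (ln (a i)))); last first.
  by move=> i /a_gt0 ai; rewrite lnK.
by rewrite -expR_sum expRK.
Qed.

Lemma gibbs_term (p r Z : R) : 0 < p -> 0 < r -> 0 < Z ->
  p * - ln p <= p * ln Z + p * - ln r + (r / Z - p).
Proof.
move=> p_gt0 r_gt0 Z_gt0.
have q_gt0 : 0 < r / (Z * p) by rewrite divr_gt0 // mulr_gt0.
have := @le_ln1Dx R (r / (Z * p) - 1).
rewrite addrCA subrr addr0 ln_div ?posrE ?mulr_gt0 // lnM ?posrE //.
move=> /(_ ltac:(lra)).
move=> /(ler_wpM2l (ltW p_gt0)).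
have -> : p * (r / (Z * p) - 1) = r / Z - p by field; rewrite ?gt_eqF.
lra.
Qed.

Lemma entropy_le_cross_entropy (T : finType) (p r : T -> R) :
  (forall t, 0 <= p t) -> \sum_t p t = 1 ->
  (forall t, 0 <= r t) -> (forall t, p t != 0 -> 0 < r t) -> 0 < \sum_t r t ->
  \sum_t (if p t == 0 then 0 else p t * - ln (p t)) <=
  ln (\sum_t r t) + \sum_t (if p t == 0 then 0 else p t * - ln (r t)).
Proof.
move=> p_ge0 p_sum1 r_ge0 r_gt0 Z_gt0; set Z := \sum_t r t.
have term t : (if p t == 0 then 0 else p t * - ln (p t)) <=
    p t * ln Z + (if p t == 0 then 0 else p t * - ln (r t)) + (r t / Z - p t).
  have [->|pt_neq0] := eqVneq (p t) 0.
    by rewrite mul0r !addr0 add0r subr0 divr_ge0 // ltW.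
  have pt_gt0 : 0 < p t by rewrite lt_def pt_neq0 p_ge0.
  by rewrite gibbs_term ?r_gt0.
apply: le_trans (ler_sum _ (fun t _ => term t)) _.
rewrite !big_split /= -mulr_suml p_sum1 mul1r sumrN -mulr_suml divff ?gt_eqF //.
by rewrite p_sum1 subrr addr0.
Qed.

Lemma entropy_le_marginals n (p : {set 'I_n} -> R) (I : 'I_n -> R) :
  (forall S, 0 <= p S) -> \sum_S p S = 1 ->
  (forall k, I k = \sum_(S : {set 'I_n}) (if k \in S then p S else 0)) ->
  \sum_S (if p S == 0 then 0 else p S * - ln (p S)) <=
  \sum_k I k + \sum_k (if I k == 0 then 0 else I k * - ln (I k)).
Proof.
move=> p_ge0 p_sum1 IE.
have I_ge0 k : 0 <= I k by rewrite IE sumr_ge0 // => S _; case: ifP.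
have p_le_I k (S : {set 'I_n}) : k \in S -> p S <= I k.
  by move=> kS; rewrite IE (bigD1 S) //= kS lerDl sumr_ge0 // => T _; case: ifP.
have I_gt0 k (S : {set 'I_n}) : k \in S -> p S != 0 -> 0 < I k.
  move=> kS pS_neq0; apply: lt_le_trans (p_le_I k S kS).
  by rewrite lt_def pS_neq0 p_ge0.
pose r (S : {set 'I_n}) := \prod_(k in S) I k.
have r_gt0 S : p S != 0 -> 0 < r S.
  by move=> pS_neq0; apply: prodr_gt0 => k kS; apply: I_gt0 kS pS_neq0.
have r_sum : \sum_S r S = \prod_k (I k + 1).
  by rewrite bigA_distr; apply: eq_bigr => S _; rewrite /r big_mkcond.
have ln_r_sum : ln (\sum_S r S) <= \sum_k I k.
  rewrite r_sum ln_prod => [|k _]; last by have := I_ge0 k; lra.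
  by apply: ler_sum => k _; rewrite addrC le_ln1Dx //; have := I_ge0 k; lra.
pose c (S : {set 'I_n}) k :=
  if k \in S then (if I k == 0 then 0 else p S * - ln (I k)) else 0.
have cross_S S : (if p S == 0 then 0 else p S * - ln (r S)) = \sum_k c S k.
  have [pS0|pS_neq0] := eqVneq (p S) 0.
    by rewrite big1 // => k _; rewrite /c pS0 mul0r; case: ifP => //; case: ifP.
  rewrite /r ln_prod => [|k kS]; last exact: I_gt0 kS pS_neq0.
  rewrite -sumrN mulr_sumr big_mkcond /=; apply: eq_bigr => k _; rewrite /c.
  by case: ifP => // kS; rewrite gt_eqF ?(I_gt0 k S).
have cross_k k : \sum_S c S k = if I k == 0 then 0 else I k * - ln (I k).
  rewrite /c; have [Ik0|Ik_neq0] := eqVneq (I k) 0.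
    by rewrite big1 // => S _; case: ifP.
  by rewrite IE mulr_suml; apply: eq_bigr => S _; case: ifP; rewrite ?mul0r.
have r_sum_gt0 : 0 < \sum_S r S.
  by rewrite r_sum prodr_gt0 // => k _; have := I_ge0 k; lra.
have r_ge0 S : 0 <= r S by apply: prodr_ge0.
apply: le_trans (entropy_le_cross_entropy p_ge0 p_sum1 r_ge0 r_gt0 r_sum_gt0) _.
rewrite (eq_bigr _ (fun S _ => cross_S S)) exchange_big /=.
by rewrite (eq_bigr _ (fun k _ => cross_k k)) lerD2r.
Qed.

End Entropy.

Lemma Ent_ln (R : realType) n (f : cube n -> bool) :
  Ent R f = (ln (2 : R))^-1 *
    \sum_(S : {set 'I_n}) (if fourier R f S ^+ 2 == 0 then 0
                           else fourier R f S ^+ 2 * - ln (fourier R f S ^+ 2)).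
Proof.
rewrite /Ent mulr_sumr; apply: eq_bigr => S _; rewrite sqrf_eq0.
have [//|fS_neq0] := eqVneq; first by rewrite mulr0.
have fS2_gt0 : 0 < fourier R f S ^+ 2 by rewrite exprn_even_gt0.
by rewrite /log2 div1r lnV ?posrE // mulrA mulrC.
Qed.

Theorem mainTheorem2 (R : realType) (n : nat) (hn : (1 <= n)%N)
    (f : cube n -> bool) :
  Ent R f <=
  (ln (2 : R))^-1 *
    (3 * total_infl R f +
     \sum_(k < n) (if infl R f k == 0 then 0
                   else infl R f k * ln (4 / infl R f k))).
Proof.
have infl_ge0 k : 0 <= infl R f k by rewrite divr_ge0 // exprn_ge0.
rewrite Ent_ln ler_wpM2l ?invr_ge0 ?ln_ge0 ?ler1n //.
apply: le_trans (entropy_le_marginals (fun S => sqr_ge0 (fourier R f S))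
  (sum_fourier_sqr R f) (infl_fourier R f)) _.
apply: lerD; first by rewrite /total_infl ler_peMl ?sumr_ge0 ?ler1n.
apply: ler_sum => k _; have [//|Ik_neq0] := eqVneq.
have Ik_gt0 : 0 < infl R f k by rewrite lt_def Ik_neq0 infl_ge0.
rewrite (@ln_div R 4 (infl R f k)) ?posrE // mulrDr -[leLHS]add0r lerD2r.
by rewrite mulr_ge0 // ln_ge0 // ler1n.
Qed.
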